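(* Let $S=\{a_i \bmod d_i : 1\le i\le r\}$ be an exact covering system and $G_S$ its exact covering system digraph, with predecessor function $P$. Then for every $n\in\mathbb{Z}$ there is an ancestor $m$ of $n$ such that $|P(m)|\ge |m|$. Moreover, if the degree $r$ of $G_S$ is at least $2$, there exists $N\in\mathbb{N}$ such that for every $m\in\mathbb{Z}$ with $|P(m)|\ge|m|$ we have $|m|\le N$.
   Context: A system of congruences $S=\{a_i \bmod d_i : 1\le i\le r\}$ with integers $a_i$ and nonzero integers $d_i$ (negative $d_i$ allowed; $n\equiv a \bmod -d$ means $n\equiv a\bmod d$) is an exact covering system if every integer satisfies exactly one of the congruences; congruences are distinguished by their chosen representatives $a_i$. The exact covering system digraph $G_S$ has vertex set $\mathbb{Z}$ and edges $(n,d_in+a_i)$ for all $n\in\mathbb{Z}$, $1\le i\le r$; $r$ is its degree. Every vertex has indegree exactly one, and the predecessor $P(n)$ is the unique integer with $(P(n),n)$ an edge. $P^k$ denotes the $k$-fold composition; $m$ is an ancestor of $n$ if $m=P^k(n)$ for some $k\in\mathbb{N}$. *)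

From mathcomp Require Import all_boot all_order all_algebra.
Set Implicit Arguments. Unset Strict Implicit. Unset Printing Implicit Defensive.
Import Order.TTheory GRing.Theory Num.Theory.
Local Open Scope ring_scope.

(* A system of congruences: a finite list of pairs (a_i, d_i) : int * int,
   meaning n = a_i (mod d_i).  Congruences are indexed by their position. *)
Definition congr_system := seq (int * int).

Definition satisfies (c : int * int) (n : int) : bool := (c.2 %| n - c.1)%Z.

Definition exact_covering (S : congr_system) : Prop :=
  all (fun c => c.2 != 0) S /\
  forall n : int, count (fun c => satisfies c n) S = 1%N.

Definition degree (S : congr_system) : nat := size S.

Definition edge (S : congr_system) (m n : int) : Prop :=
  exists2 c, c \in S & n = c.2 * m + c.1.

(* P is the predecessor function of G_S: (P n, n) is an edge for every n.
   (Indegree is exactly one for an exact covering system, so P is unique.) *)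
Definition is_predecessor (S : congr_system) (P : int -> int) : Prop :=
  forall n : int, edge S (P n) n.

Definition ancestor (P : int -> int) (m n : int) : Prop :=
  exists k : nat, m = iter k P n.

From mathcomp Require Import all_boot all_order all_algebra zify lra.
Import Order.TTheory GRing.Theory Num.Theory.
Local Open Scope ring_scope.

(* The norm cannot decrease strictly forever along n, P n, P (P n), ..., which
   gives the ancestor.  When r >= 2 no modulus is a unit: such a congruence is
   satisfied by every integer, so the residue of any other congruence would be
   covered twice.  Then m = d P(m) + a and |m| <= |P m| give
   2 |P m| <= |m - a| <= |P m| + |a|, so |m| <= |a| is bounded by the largest
   residue. *)

Lemma ancestor_refl (P : int -> int) (n : int) : ancestor P n n.
Proof. by exists 0%N. Qed.

Lemma ancestor_pred (P : int -> int) (m n : int) :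
  ancestor P m (P n) -> ancestor P m n.
Proof. by case=> k ->; exists k.+1; rewrite iterSr. Qed.

Lemma exists_ancestor_norm_le_pred (P : int -> int) (n : int) :
  exists m : int, ancestor P m n /\ `|m| <= `|P m|.
Proof.
have [k] := ubnP `|n|%N; elim: k n => // k IH n /ltnSE le_nk.
have [le_nPn | lt_Pnn] := leP `|n| `|P n|.
  by exists n; split; first exact: ancestor_refl.
have [|m [anc_m le_m]] := IH (P n); first by move: lt_Pnn le_nk; rewrite -!abszE; lia.
by exists m; split; first exact: ancestor_pred.
Qed.

Lemma norm_le_offset (R : realDomainType) (d p a : R) :
  2 <= `|d| -> `|d * p + a| <= `|p| -> `|d * p + a| <= `|a|.
Proof.
move=> ge2_d le_p; set m := d * p + a in le_p *.
have le_dp : `|d| * `|p| <= `|m| + `|a| by rewrite -normrM -(addrK a (d * p)) ler_normB.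
have le_2p : 2 * `|p| <= `|d| * `|p| by rewrite ler_wpM2r.
lra.
Qed.

Lemma satisfies_residue (c : int * int) : satisfies c c.1.
Proof. by rewrite /satisfies subrr dvdz0. Qed.

Lemma satisfies_unit_modulus (c : int * int) (n : int) :
  `|c.2| = 1 -> satisfies c n.
Proof.
by move=> unit_c; rewrite /satisfies dvdzE (_ : `|c.2|%N = 1%N) ?dvd1n //; lia.
Qed.

Lemma exact_covering_modulus_ge2 {S : congr_system} {c : int * int} :
  exact_covering S -> (2 <= size S)%N -> c \in S -> 2 <= `|c.2|.
Proof.
move=> [nz_S cov_S] size_S cS.
have nz_c : c.2 != 0 by exact: (allP nz_S).
suff : `|c.2| != 1 by move: nz_c; rewrite -normr_eq0; lia.
apply/eqP=> unit_c.
have [[a' d'] c'S] : exists c', c' \in rem c S.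
  by case: (rem c S) (size_rem cS) => [|c' s] /=; [lia | exists c'; rewrite mem_head].
have := cov_S a'; rewrite (permP (perm_to_rem cS)) /= satisfies_unit_modulus //=.
have : has (satisfies^~ a') (rem c S).
  by apply/hasP; exists (a', d'); last exact: satisfies_residue.
rewrite has_count; lia.
Qed.

Theorem mainTheorem4 (S : congr_system) (P : int -> int) :
  exact_covering S -> is_predecessor S P ->
  (forall n : int, exists m : int, ancestor P m n /\ `|m| <= `|P m|) /\
  ((2 <= degree S)%N ->
     exists N : nat, forall m : int, `|m| <= `|P m| -> `|m| <= N%:Z).
Proof.
move=> cov_S pred_P; split; first exact: exists_ancestor_norm_le_pred.
move=> size_S; exists (\max_(c <- S) `|c.1|%N) => m le_m.
have [c cS def_m] := pred_P m.
have ge2_c := exact_covering_modulus_ge2 cov_S size_S cS.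
have le_a : `|m| <= `|c.1| by rewrite def_m norm_le_offset // -def_m.
by rewrite (le_trans le_a) // -abszE lez_nat (leq_bigmax_seq c).
Qed.
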